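(* Let $G=HN\le\mathrm{Sym}(\Omega)$ be a finite non-Frobenius $2$-transitive affine permutation group, where $N$ is the regular normal elementary abelian subgroup of order $p^k$ ($p$ prime) and $H$ is a point stabiliser. Let $H_p$ be a Sylow $p$-subgroup of $H$ and assume $H_p\ne1$. (i) $[N,H_p]$ is a proper subgroup of $N$, and $tz$ is a derangement for all $t\in H_p$ and all $z\in N\setminus[N,H_p]$. (ii) Suppose furthermore that $\kappa(G)=2$, and let $x\in N\setminus\{1\}$ (so $N\setminus\{1\}=x^G$). Then $H_p$ has exponent $p$, $H_p\setminus\{1\}\subseteq t^H$ for some $t\in H_p\setminus\{1\}$, $|\mathrm C_H(x)|=p^b$ for some $b\ge1$, and hence $|H|=(p^k-1)p^b$.
   Context: A derangement is an element fixing no point; $\kappa(G)$ is the number of conjugacy classes of derangements. A Frobenius group is a transitive non-regular group in which only the identity fixes more than one point. $[N,H_p]$ is the subgroup generated by commutators $[n,h]$, $n\in N$, $h\in H_p$. *)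

From HB Require Import structures.
From mathcomp Require Import all_boot all_fingroup all_solvable.
Set Implicit Arguments. Unset Strict Implicit. Unset Printing Implicit Defensive.
Local Open Scope group_scope.

Definition derangement (T : finType) (g : {perm T}) : bool :=
  [forall a, g a != a].

(* kappa(G): number of conjugacy classes of G consisting of derangements.
   (Conjugacy classes are conjugation invariant; a class consists of
   derangements iff one/all of its elements are derangements.) *)
Definition kappa (T : finType) (G : {group {perm T}}) : nat :=
  #|[set C in classes G | [forall g in C, derangement g]]|.

Definition two_transitive (T : finType) (G : {set {perm T}}) : Prop :=
  forall x y u v : T, x != y -> u != v ->
    exists2 g, g \in G & g x = u /\ g y = v.

Definition regular_on (T : finType) (G : {set {perm T}}) : Prop :=
  [transitive G, on [set: T] | 'P] /\ forall a : T, 'C_G[a | 'P] = 1.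

Definition frobenius_perm (T : finType) (G : {set {perm T}}) : Prop :=
  [/\ [transitive G, on [set: T] | 'P],
      ~ regular_on G &
      forall g, g \in G -> forall a b : T, a != b -> g a = a -> g b = b -> g = 1].

From HB Require Import structures.
From mathcomp Require Import all_boot all_fingroup all_solvable.
(* As [N] is regular and [H] fixes [a], [H :&: N = 1] and [G = H N]. If [t z]
   ([t] in [H], [z] in [N]) fixed a point, [z] would be a commutator [[m, t]^-1]
   with [m] in [N]; this gives (i), since [[N, Hp]] is proper in the [p]-group
   [N Hp]. Moreover the [G]-class of [t z] determines the [H]-class of [t]. If
   [kappa G = 2], the derangement classes are [N^#] and a single class outside
   [N], so all elements of [Hp^#] are [H]-conjugate, hence of order [p]; the same
   argument applied to an element of prime order [q <> p] of ['C_H[x]], acting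
   coprimely on [N], shows that ['C_H[x]] is a [p]-group. It is nontrivial as
   [Hp] centralises an element of [N^#], and [|H| = |N^#| |C_H[x]|] because [H]
   is transitive on [N^#]. *)

Set Implicit Arguments. Unset Strict Implicit. Unset Printing Implicit Defensive.
Local Open Scope group_scope.

Lemma derangementJ (T : finType) (g h : {perm T}) :
  derangement g -> derangement (g ^ h).
Proof.
move=> /forallP dg; apply/forallP => b; apply/eqP => gb.
by have := dg (h^-1 b); rewrite -{2}gb conjgE !permM permK eqxx.
Qed.

Definition derangement_classes (T : finType) (G : {group {perm T}}) :=
  [set C in classes G | [forall g in C, derangement g]].

Lemma class_derangement (T : finType) (G : {group {perm T}}) g :
  g \in G -> derangement g -> g ^: G \in derangement_classes G.
Proof.
move=> Gg dg; rewrite inE mem_classes //=.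
by apply/forall_inP => _ /imsetP [h _ ->]; apply: derangementJ.
Qed.

Lemma card2_eq (X : finType) (S : {set X}) (A B C : X) :
  #|S| = 2 -> A \in S -> B \in S -> C \in S -> A != B -> A != C -> B = C.
Proof.
move=> cardS SA SB SC nAB nAC.
have defS : [set A; B] = S.
  apply/eqP; rewrite eqEcard cards2 nAB cardS andbT.
  by apply/subsetP => u /set2P [] ->.
by move: SC nAC; rewrite -defS => /set2P [->|//]; rewrite eqxx.
Qed.

Section Regular.

Variables (T : finType) (N : {group {perm T}}).
Hypothesis regN : regular_on N.

Lemma regular_orbit a b : exists2 m, m \in N & m a = b.
Proof.
have : b \in orbit 'P N a by rewrite (atransP regN.1 _ (in_setT a)) in_setT.
by case/orbitP => m Nm mab; exists m.
Qed.

Lemma regular_fix1 n b : n \in N -> n b = b -> n = 1.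
Proof.
by move=> Nn nb; apply/set1gP; rewrite -(regN.2 b) inE Nn; apply/astab1P.
Qed.

Lemma regular_derangement n : n \in N -> n != 1 -> derangement n.
Proof.
move=> Nn n1; apply/forallP => b; apply: contra n1 => /eqP nb.
by rewrite (regular_fix1 Nn nb).
Qed.

Lemma regular_nontrivial (g : {perm T}) : g != 1 -> N :!=: 1.
Proof.
move=> g1; have [c gc] : exists c, g c != c.
  apply/existsP; apply: contraR g1 => /existsPn fix_g.
  by apply/eqP/permP => c; rewrite perm1; apply/eqP/negPn/fix_g.
have [m Nm mc] := regular_orbit c (g c).
apply/trivgPn; exists m => //; apply: contra gc => /eqP m1.
by rewrite -mc m1 perm1.
Qed.

End Regular.

Section PgroupAction.

Variables (gT : finGroupType) (p : nat) (N A : {group gT}).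
Hypotheses (pN : p.-group N) (pA : p.-group A) (nNA : A \subset 'N(N)).
Hypothesis ntN : N :!=: 1.

Let P := (N <*> A)%G.

Let nilP : nilpotent P.
Proof.
have pP : p.-group P by rewrite /P /= norm_joinEr // pgroupM pN.
exact: pgroup_nil pP.
Qed.

Let nsNP : N <| P.
Proof. by rewrite /normal joing_subl join_subG normG nNA. Qed.

Lemma pgroup_commg_proper : [~: N, A] \proper N.
Proof.
apply: nil_comm_properl nilP (normal_sub nsNP) ntN _.
by rewrite subsetI joing_subr nNA.
Qed.

Lemma pgroup_cent1_nontrivial : exists2 y, y \in N^# & A \subset 'C[y].
Proof.
have [y /setIP [Ny /setIP [_ cPy]] y1] := trivgPn _ (meet_center_nil nilP nsNP ntN).
exists y; first by rewrite !inE y1.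
by rewrite sub_cent1 (subsetP (centS (joing_subr N A))).
Qed.

End PgroupAction.

Section ClassOfPgroup.

Variables (gT : finGroupType) (p : nat) (A G : {group gT}) (t : gT).
Hypotheses (pA : p.-group A) (At : t \in A^#) (clsA : A^# \subset t ^: G).

Let order_class u : u \in A^# -> #[u] = #[t].
Proof. by move=> Au; have /imsetP [g _ ->] := subsetP clsA u Au; apply: orderJ. Qed.

Lemma order_class_pgroup : #[t] = p.
Proof.
have ntA : A :!=: 1 by apply/trivgPn; exists t; case/setD1P: At.
have [pr_p pA_dvd _] := pgroup_pdiv pA ntA.
have [u Au ou] := Cauchy pr_p pA_dvd.
have u1 : u != 1 by apply: contraTneq (prime_gt1 pr_p) => u1; rewrite -ou u1 order1.
by rewrite -ou order_class // !inE u1.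
Qed.

Lemma exponent_class_pgroup : exponent A = p.
Proof.
apply/eqP; rewrite eqn_dvd -{2}order_class_pgroup dvdn_exponent ?andbT; last first.
  by case/setD1P: At.
apply/exponentP => u Au; have [->|u1] := eqVneq u 1; first exact: expg1n.
by rewrite -order_class_pgroup -(@order_class u) ?expg_order // !inE u1.
Qed.

End ClassOfPgroup.

Section AffineStabiliser.

Variables (T : finType) (G N H : {group {perm T}}) (a : T).
Hypotheses (nsNG : N <| G) (regN : regular_on N) (defH : H :=: 'C_G[a | 'P]).

Let sNG := normal_sub nsNG.
Let nNG := normal_norm nsNG.

Lemma stab_sub : H \subset G.
Proof. by rewrite defH subsetIl. Qed.

Lemma mem_stab g : g \in G -> g a = a -> g \in H.
Proof. by move=> Gg ga; rewrite defH inE Gg; apply/astab1P. Qed.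

Lemma stab_fix g : g \in H -> g a = a.
Proof. by rewrite defH inE => /andP [_ /astab1P]. Qed.

Lemma stab_TI w : w \in H -> w \in N -> w = 1.
Proof. by move=> Hw Nw; exact (regular_fix1 regN Nw (stab_fix Hw)). Qed.

(* If [t z] fixes [m a] with [m] in [N], then [m (t z) m^-1] lies in [H], which
   forces [z = [m, t]^-1]. *)
Lemma derangement_mul_stab (A : {group {perm T}}) t z :
  A \subset H -> t \in A -> z \in N :\: [~: N, A] -> derangement (t * z).
Proof.
move=> sAH At /setDP [Nz zA]; apply/forallP => b; apply/eqP => tzb.
have [m Nm mab] := regular_orbit regN a b.
have Ht := subsetP sAH t At; have Gt := subsetP stab_sub t Ht.
have Gm := subsetP sNG m Nm; have Gz := subsetP sNG z Nz.
have Hu : m * (t * z) * m^-1 \in H.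
  apply: mem_stab; first by rewrite !groupM ?groupV.
  by rewrite permM (permM m) mab tzb -mab -permM mulgV perm1.
have Nw : m ^ t * z * m^-1 \in N.
  by rewrite groupM ?groupV // groupM // memJ_norm // (subsetP nNG).
have Hw : m ^ t * z * m^-1 \in H.
  have -> : m ^ t * z * m^-1 = t^-1 * (m * (t * z) * m^-1).
    by rewrite conjgE !mulgA.
  by rewrite groupM ?groupV.
have /eqP := stab_TI Hw Nw; rewrite -eq_mulgV1 => /eqP mtz.
have zE : z = [~ m, t]^-1.
  by rewrite commgEl invMg invgK; apply: (mulgI (m ^ t)); rewrite mulKVg mtz.
by move: zA; rewrite zE groupV mem_commg.
Qed.

(* Write [g = h n] with [h] in [H] and [n] in [N]: modulo [N], conjugating
   [t z] by [g] only conjugates [t] by [h]. *)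
Lemma class_stab_coset t t' z z' :
  t \in H -> t' \in H -> z \in N -> z' \in N ->
  (t * z) ^: G = (t' * z') ^: G -> t' \in t ^: H.
Proof.
move=> Ht Ht' Nz Nz' eq_cls.
have /imsetP [g Gg tzg] : t' * z' \in (t * z) ^: G by rewrite eq_cls class_refl.
have [n Nn na] := regular_orbit regN a (g a).
have Gn := subsetP sNG n Nn.
have Hh : g * n^-1 \in H.
  by apply: mem_stab; rewrite ?groupM ?groupV // permM -na -permM mulgV perm1.
set h := g * n^-1 in Hh; have Gh := subsetP stab_sub h Hh.
have Gt := subsetP stab_sub t Ht.
set u := (t * z) ^ h.
have Nc : [~ u, n] \in N.
  have sGNN : [~: G, N] \subset N by rewrite commg_subr.
  by rewrite (subsetP sGNN) // mem_commg // groupJ // groupM // (subsetP sNG).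
set w := z ^ h * [~ u, n].
have Nw : w \in N by rewrite groupM // memJ_norm // (subsetP nNG).
have tzE : t' * z' = t ^ h * w.
  by rewrite tzg -(mulgKV n g) -/h conjgM conjg_mulR -/u {1}/u conjMg -mulgA.
have tt' : t' ^-1 * t ^ h = z' * w^-1.
  by apply: (mulgI t'); rewrite mulKVg mulgA tzE mulgK.
have /eqP : t' ^-1 * t ^ h = 1.
  by apply: stab_TI; [rewrite groupM ?groupV ?groupJ | rewrite tt' groupM ?groupV].
by rewrite -eq_mulVg1 => /eqP ->; apply: memJ_class.
Qed.

Lemma stab_conj_N x y : two_transitive G ->
  x \in N^# -> y \in N^# -> exists2 g, g \in H & x ^ g = y.
Proof.
move=> tt /setD1P [x1 Nx] /setD1P [y1 Ny].
have moves v : v \in N -> v != 1 -> a != v a.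
  by move=> Nv; apply: contra => /eqP va; rewrite (regular_fix1 regN Nv (esym va)).
have [g Gg [ga gx]] := tt a (x a) a (y a) (moves x Nx x1) (moves y Ny y1).
have Hg := mem_stab Gg ga; exists g => //.
have Nw : x ^ g * y^-1 \in N.
  by rewrite groupM ?groupV // memJ_norm // (subsetP nNG).
have wa : (x ^ g * y^-1) a = a.
  have gia : g^-1 a = a by rewrite -{1}ga permK.
  by rewrite permM conjgE !permM gia gx -permM mulgV perm1.
have Hw : x ^ g * y^-1 \in H by apply: mem_stab; rewrite // (subsetP sNG).
by apply/eqP; rewrite eq_mulgV1; apply/eqP; apply: stab_TI.
Qed.

Lemma class_stab_N x : two_transitive G -> x \in N^# -> x ^: H = N^#.
Proof.
move=> tt Nx; apply/setP => y; apply/imsetP/idP => [[g Hg ->] | Ny].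
  case/setD1P: Nx => x1 Nx; rewrite !inE conjg_eq1 x1 memJ_norm //.
  exact: subsetP nNG g (subsetP stab_sub g Hg).
by have [g Hg <-] := stab_conj_N tt Nx Ny; exists g.
Qed.

Lemma card_stab x : two_transitive G -> x \in N^# -> #|H| = (#|N^#| * #|'C_H[x]|)%N.
Proof.
move=> tt Nx.
by rewrite -(Lagrange (subsetIl H 'C[x])) index_cent1 (class_stab_N tt Nx) mulnC.
Qed.

(* The two derangement classes are [x^G] for any [x] in [N^#], inside [N], and
   [(t0 z0)^G], outside [N]; so [(t z)^G] must be the latter. *)
Lemma kappa2_stab_class t0 z0 t z : kappa G = 2 -> N :!=: 1 ->
  t0 \in H^# -> z0 \in N -> derangement (t0 * z0) ->
  t \in H^# -> z \in N -> derangement (t * z) -> t \in t0 ^: H.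
Proof.
move=> kappaG /trivgPn [x Nx x1] Ht0 Nz0 dt0z0 Ht Nz dtz.
have Gstab u v : u \in H -> v \in N -> u * v \in G.
  by move=> Hu Nv; apply: groupM; [apply: (subsetP stab_sub) | apply: (subsetP sNG)].
have xG_neq u v : u \in H^# -> v \in N -> x ^: G != (u * v) ^: G.
  case/setD1P=> u1 Hu Nv; apply: contra u1 => /eqP eq_cls.
  have : u * v \in N.
    have /imsetP [g Gg ->] : u * v \in x ^: G by rewrite eq_cls class_refl.
    by rewrite memJ_norm // (subsetP nNG).
  by rewrite groupMr // => Nu; rewrite (stab_TI Hu Nu).
have [_ Ht0'] := setD1P Ht0; have [_ Ht'] := setD1P Ht.
apply: (class_stab_coset Ht0' Ht' Nz0 Nz).
apply: card2_eq (kappaG) _ _ _ (xG_neq _ _ Ht0 Nz0) (xG_neq _ _ Ht Nz).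
- apply: class_derangement; first exact: subsetP sNG x Nx.
  exact (regular_derangement regN Nx x1).
- exact: class_derangement (Gstab _ _ Ht0' Nz0) dt0z0.
- exact: class_derangement (Gstab _ _ Ht' Nz) dtz.
Qed.

Section SylowOfStabiliser.

Variables (p : nat) (Hp : {group {perm T}}).
Hypotheses (abN : p.-abelem N) (sylHp : p.-Sylow(H) Hp) (ntHp : Hp :!=: 1).

Let sHpH := pHall_sub sylHp.
Let pHp := pHall_pgroup sylHp.
Let pN := abelem_pgroup abN.
Let sHpH1 : Hp^# \subset H^# := setSD [set 1] sHpH.

Let nNHp : Hp \subset 'N(N).
Proof. by rewrite (subset_trans sHpH) // (subset_trans stab_sub). Qed.

Let ntN : N :!=: 1.
Proof. by have [t _ t1] := trivgPn _ ntHp; exact (regular_nontrivial regN t1). Qed.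

Lemma sylow_commg_proper : [~: N, Hp] \proper N.
Proof. exact: pgroup_commg_proper pN pHp nNHp ntN. Qed.

Let sylow_coset_derangement :
  exists2 z, z \in N & forall t, t \in Hp -> derangement (t * z).
Proof.
have [_ [z Nz zN]] := properP sylow_commg_proper.
by exists z => // t Hpt; apply: derangement_mul_stab sHpH Hpt _; rewrite inE zN.
Qed.

Hypothesis kappaG : kappa G = 2.

Lemma kappa2_sylow_class t0 : t0 \in Hp^# -> Hp^# \subset t0 ^: H.
Proof.
move=> Hpt0; have [z Nz dz] := sylow_coset_derangement.
apply/subsetP => t Hpt.
apply: (kappa2_stab_class kappaG ntN (subsetP sHpH1 t0 Hpt0) Nz _ (subsetP sHpH1 t Hpt) Nz).
  by apply: dz; case/setD1P: Hpt0.
by apply: dz; case/setD1P: Hpt.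
Qed.

Lemma kappa2_sylow_exponent : exponent Hp = p.
Proof.
have [t0 Hpt0 t01] := trivgPn _ ntHp; have Hpt0' : t0 \in Hp^# by rewrite !inE t01.
exact: exponent_class_pgroup pHp Hpt0' (kappa2_sylow_class Hpt0').
Qed.

(* An element [h] of prime order [q <> p] centralising [x] acts coprimely on the
   abelian group [N], so [x] avoids [[N, <[h]>]] and [h x] is a derangement;
   then [h] is conjugate to an element of [Hp^#], of order [p]. *)
Lemma kappa2_cent1_pgroup x : x \in N^# -> p.-group 'C_H[x].
Proof.
move=> Nx; apply/pgroupP => q pr_q /(Cauchy pr_q) [h /setIP [Hh cxh] oh].
rewrite inE; apply/negPn/negP => qp.
have [x1 Nx'] := setD1P Nx.
have nNh : <[h]> \subset 'N(N).
  by rewrite cycle_subG (subsetP nNG) ?(subsetP stab_sub).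
have coNh : coprime #|N| #|<[h]>|.
  by rewrite -orderE oh (pnat_coprime pN) // pnatE // !inE.
have xh : x \notin [~: N, <[h]>].
  apply: contra x1 => xNh; apply/eqP/set1gP.
  rewrite -(coprime_abel_cent_TI nNh coNh (abelem_abelian abN)) inE xNh.
  by rewrite cent_cycle; apply/cent1P/esym/cent1P.
have h1 : h != 1 by apply: contraTneq (prime_gt1 pr_q) => h1; rewrite -oh h1 order1.
have shH : <[h]> \subset H by rewrite cycle_subG.
have xD : x \in N :\: [~: N, <[h]>] by rewrite inE xh.
have Hh' : h \in H^# by rewrite !inE h1 Hh.
have [t0 Hpt0 t01] := trivgPn _ ntHp; have Hpt0' : t0 \in Hp^# by rewrite !inE t01.
have [z Nz dz] := sylow_coset_derangement.
have := kappa2_stab_class kappaG ntN (subsetP sHpH1 t0 Hpt0') Nz (dz t0 Hpt0) Hh' Nx'.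
case/(_ (derangement_mul_stab shH (cycle_id h) xD))/imsetP => g _ hg.
move: qp; rewrite -oh hg orderJ.
by rewrite (order_class_pgroup pHp Hpt0' (kappa2_sylow_class Hpt0')) eqxx.
Qed.

(* [Hp] centralises some [y] in [N^#] and [x] is [H]-conjugate to [y], so a
   conjugate of [Hp] lies in ['C_H[x]]. *)
Lemma kappa2_cent1_card x : two_transitive G -> x \in N^# ->
  exists2 b, (0 < b)%N & #|'C_H[x]| = (p ^ b)%N.
Proof.
move=> tt Nx; have [b Cb] := p_natP (kappa2_cent1_pgroup Nx).
exists b => //.
have [y Ny cHpy] := pgroup_cent1_nontrivial pN pHp nNHp ntN.
have /imsetP [g Hg xE] : x \in y ^: H by rewrite (class_stab_N tt Ny).
have sHpgC : Hp :^ g \subset 'C_H[x].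
  by rewrite subsetI conj_subG ?sHpH //= xE cent1J conjSg.
rewrite lt0n; apply: contra ntHp => /eqP b0.
by rewrite trivg_card_le1 -(cardJg Hp g) -(expn0 p) -b0 -Cb subset_leq_card.
Qed.

End SylowOfStabiliser.

End AffineStabiliser.

Theorem lemma4p5 (T : finType) (G N H Hp : {group {perm T}}) (p k : nat) (a : T) :
  prime p ->
  two_transitive G ->
  ~ frobenius_perm G ->
  N <| G -> regular_on N -> p.-abelem N -> #|N| = (p ^ k)%N ->
  H = 'C_G[a | 'P] ->
  Hp \in 'Syl_p(H) -> Hp :!=: 1 ->
  ([~: N, Hp] \proper N /\
   forall t z, t \in Hp -> z \in N :\: [~: N, Hp] -> derangement (t * z)) /\
  (kappa G = 2 ->
   forall x, x \in N -> x != 1 ->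
   [/\ exponent Hp = p,
       exists2 t, t \in Hp^# & Hp^# \subset t ^: H &
       exists2 b, (1 <= b)%N & #|'C_H[x]| = (p ^ b)%N /\
                              #|H| = ((p ^ k - 1) * p ^ b)%N]).
Proof.
move=> _ tt _ nsNG regN abN cardN defHG sylHp ntHp.
have defH : H :=: 'C_G[a | 'P] by rewrite defHG.
have sylHp' : p.-Sylow(H) Hp by rewrite inE in sylHp.
split.
  split; first exact (sylow_commg_proper nsNG regN defH abN sylHp' ntHp).
  by move=> t z; apply: (derangement_mul_stab nsNG regN defH (pHall_sub sylHp')).
move=> kappaG x Nx x1; have Nx' : x \in N^# by rewrite !inE x1.
have [t0 Hpt0 t01] := trivgPn _ ntHp; have Hpt0' : t0 \in Hp^# by rewrite !inE t01.
have [b b_gt0 Cb] := kappa2_cent1_card nsNG regN defH abN sylHp' ntHp kappaG tt Nx'.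
split.
- exact (kappa2_sylow_exponent nsNG regN defH abN sylHp' ntHp kappaG).
- by exists t0; last exact (kappa2_sylow_class nsNG regN defH abN sylHp' ntHp kappaG Hpt0').
exists b => //; split => //.
by rewrite (card_stab nsNG regN defH tt Nx') Cb -cardN (cardsD1 1 N) group1 add1n subn1.
Qed.
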